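(* Let $A$ be a differential ring, $X=\operatorname{Spec}^\Delta A$, and let $D$ be a differential subring of $\mathcal O'(X)$ containing $\iota'(A)$. Let $\iota'\colon A\to D$ denote the corresponding homomorphism. Then $\iota'^*\colon\operatorname{Spec}^\Delta D\to\operatorname{Spec}^\Delta A$, $\mathfrak q\mapsto\iota'^{-1}(\mathfrak q)$, is a homeomorphism.
   Context: All rings are commutative with unit. A differential ring is a ring with finitely many pairwise commuting derivations. $\operatorname{Spec}^\Delta R$ is the set of prime ideals of a differential ring $R$ closed under all derivations, with the Kolchin topology (closed sets $V(E)=\{\mathfrak p: E\subseteq\mathfrak p\}$). For $\mathfrak p\in X$, $K(\mathfrak p)$ is the fraction field of $A/\mathfrak p$ with the induced derivations. For an open $U\subseteq X$, $\mathcal O'(U)$ is the set of functions $f$ on $U$ with $f(\mathfrak p)\in K(\mathfrak p)$ that are regular at every point of $U$, where $f$ is regular at $\mathfrak p$ if there exist an open neighborhood $W\subseteq U$ of $\mathfrak p$ and $a,b\in A$ with $b\notin\mathfrak q$ and $f(\mathfrak q)=a/b$ in $K(\mathfrak q)$ for all $\mathfrak q\in W$. With pointwise operations and pointwise derivations, $\mathcal O'(U)$ is a differential ring. The differential homomorphism $\iota'\colon A\to\mathcal O'(X)$ sends $a$ to the function $\mathfrak p\mapsto (a\bmod\mathfrak p)\in K(\mathfrak p)$. *)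

From HB Require Import structures.
From mathcomp Require Import all_boot all_order all_algebra.
Set Implicit Arguments. Unset Strict Implicit. Unset Printing Implicit Defensive.
Import GRing.Theory.
Local Open Scope ring_scope.

Definition is_derivation (A : comPzRingType) (D : A -> A) : Prop :=
  (forall a b, D (a + b) = D a + D b) /\ (forall a b, D (a * b) = D a * b + a * D b).

Definition diff_ring_structure (A : comPzRingType) (n : nat) (d : 'I_n -> A -> A) : Prop :=
  (forall i, is_derivation (d i)) /\ (forall i j a, d i (d j (a)) = d j (d i a)).

Section DiffSpec.
Variables (A : comPzRingType) (n : nat) (d : 'I_n -> A -> A).

Definition diff_prime (p : A -> Prop) : Prop :=
  ((p 0) /\ ((forall a b, p a -> p b -> p (a + b))) /\ ((forall a, p a -> p (- a))) /\ ((forall r a, p a -> p (r * a))) /\ (~ p 1) /\ ((forall a b, p (a * b) -> p a \/ p b)) /\ ((forall i a, p a -> p (d i a)))).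

Record point := Point { pt : A -> Prop; ptP : diff_prime pt }.

(* Elements of K(p) = Frac(A/p) are represented by their equivalence class:
   a predicate c on pairs (a, b), meaning "a/b represents the element",
   where b is not in p and (a,b) ~ (a',b') iff a b' - a' b \in p. *)
Definition Kclass (p : A -> Prop) (c : A -> A -> Prop) : Prop :=
  exists a0 b0, ~ p b0 /\ forall a b, c a b <-> (~ p b /\ p (a * b0 - a0 * b)).

(* The element a/b of K(p) (meaningful when b is not in p). *)
Definition Kfrac (p : A -> Prop) (a0 b0 : A) : A -> A -> Prop :=
  fun a b => ~ p b /\ p (a * b0 - a0 * b).

Definition Kadd p (c1 c2 : A -> A -> Prop) : A -> A -> Prop :=
  fun x y => exists a1 b1 a2 b2, c1 a1 b1 /\ c2 a2 b2 /\
     Kfrac p (a1 * b2 + a2 * b1) (b1 * b2) x y.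
Definition Kmul p (c1 c2 : A -> A -> Prop) : A -> A -> Prop :=
  fun x y => exists a1 b1 a2 b2, c1 a1 b1 /\ c2 a2 b2 /\
     Kfrac p (a1 * a2) (b1 * b2) x y.
Definition Kopp p (c : A -> A -> Prop) : A -> A -> Prop :=
  fun x y => exists a b, c a b /\ Kfrac p (- a) b x y.
Definition Kder p (i : 'I_n) (c : A -> A -> Prop) : A -> A -> Prop :=
  fun x y => exists a b, c a b /\ Kfrac p (d i a * b - a * d i b) (b * b) x y.

(* Functions f on X with f(p) \in K(p). *)
Definition sec := point -> A -> A -> Prop.

Definition szero : sec := fun p => Kfrac (pt p) 0 1.
Definition sone : sec := fun p => Kfrac (pt p) 1 1.
Definition sadd (f g : sec) : sec := fun p => Kadd (pt p) (f p) (g p).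
Definition smul (f g : sec) : sec := fun p => Kmul (pt p) (f p) (g p).
Definition sopp (f : sec) : sec := fun p => Kopp (pt p) (f p).
Definition sder (i : 'I_n) (f : sec) : sec := fun p => Kder (pt p) i (f p).

Definition iota' (a : A) : sec := fun p => Kfrac (pt p) a 1.

Definition openX (W : point -> Prop) : Prop :=
  exists E : A -> Prop, forall q, W q <-> ~ (forall a, E a -> pt q a).

Definition regular_at (f : sec) (p : point) : Prop :=
  exists (W : point -> Prop) (a b : A), openX W /\ W p /\
    forall q, W q -> ~ pt q b /\ (forall x y, f q x y <-> Kfrac (pt q) a b x y).

Definition Oprime (f : sec) : Prop :=
  (forall p, Kclass (pt p) (f p)) /\ (forall p, regular_at f p).

Definition diff_subring_containing_iota (D : sec -> Prop) : Prop :=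
  (((forall f, D f -> Oprime f)) /\ (D szero) /\ (D sone) /\ ((forall f g, D f -> D g -> D (sadd f g))) /\ ((forall f, D f -> D (sopp f))) /\ ((forall f g, D f -> D g -> D (smul f g))) /\ ((forall i f, D f -> D (sder i f))) /\ ((forall a, D (iota' a)))).

Definition diff_prime_D (D : sec -> Prop) (Q : sec -> Prop) : Prop :=
  (((forall f, Q f -> D f)) /\ (Q szero) /\ ((forall f g, Q f -> Q g -> Q (sadd f g))) /\ ((forall f, Q f -> Q (sopp f))) /\ ((forall r f, D r -> Q f -> Q (smul r f))) /\ (~ Q sone) /\ ((forall f g, D f -> D g -> Q (smul f g) -> Q f \/ Q g)) /\ ((forall i f, Q f -> Q (sder i f)))).

Definition comap (Q : sec -> Prop) : A -> Prop := fun a => Q (iota' a).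

(* Kolchin-closed subsets of Spec^Delta A and Spec^Delta D (points are ideals,
   i.e. predicates; a subset C is closed iff it agrees with some V(E) on Spec). *)
Definition closedA (C : (A -> Prop) -> Prop) : Prop :=
  exists E : A -> Prop, forall p, diff_prime p -> (C p <-> forall a, E a -> p a).
Definition closedD (D : sec -> Prop) (C : (sec -> Prop) -> Prop) : Prop :=
  exists E : sec -> Prop, forall Q, diff_prime_D D Q -> (C Q <-> forall f, E f -> Q f).

End DiffSpec.

(* phi : XS -> XT is a homeomorphism (XS, XT subsets of S, T with the given
   closed sets): well defined, bijective, continuous and closed. *)
Definition homeomorphism {S T : Type} (XS : S -> Prop) (XT : T -> Prop)
  (closedS : (S -> Prop) -> Prop) (closedT : (T -> Prop) -> Prop) (phi : S -> T) : Prop :=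
  (((forall s, XS s -> XT (phi s))) /\ ((forall s1 s2, XS s1 -> XS s2 -> phi s1 = phi s2 -> s1 = s2)) /\ ((forall t, XT t -> exists s, XS s /\ phi s = t)) /\ ((forall C, closedT C -> closedS (fun s => C (phi s)))) /\ ((forall C, closedS C -> closedT (fun t => exists s, XS s /\ C s /\ phi s = t)))).

From HB Require Import structures.
From mathcomp Require Import all_boot all_order all_algebra.
From mathcomp Require Import ring.
From Stdlib Require Import Classical FunctionalExtensionality PropExtensionality ProofIrrelevance.
Set Implicit Arguments. Unset Strict Implicit. Unset Printing Implicit Defensive.
Import GRing.Theory.
Local Open Scope ring_scope.

(* Proof of Theorem 2.6.  For a point P of X = Spec^Delta A let
     m_P = { f in D | f(P) = 0 }
   (the vanishing ideal of P).  The map P |-> m_P is inverse to iota'^*: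
   - iota' is a differential ring homomorphism, so iota'^{-1}(Q) is a
     differential prime of A for every differential prime Q of D;
   - m_P is a differential prime of D and iota'^{-1}(m_P) = P;
   - every differential prime Q equals m_P for P = iota'^{-1}(Q): near P an
     f in D is a/b on some basic open D(e) containing P, hence
     e * (b f - a) = 0 in D; since e, b are not in P this gives
     f in Q <-> a in P <-> f(P) = 0.
   Continuity is immediate (iota'^*-preimage of V(E) is V(iota'(E))), and the
   image of V(E) is V(Z) where Z collects the numerators e * a of the local
   representations f = a/b on D(e), f in E. *)

Lemma pred_ext (T : Type) (P Q : T -> Prop) : (forall x, P x <-> Q x) -> P = Q.
Proof.
by move=> H; apply: functional_extensionality => x; apply: propositional_extensionality.
Qed.

Lemma rel2_ext (T : Type) (c c' : T -> T -> Prop) :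
  (forall x y, c x y <-> c' x y) -> c = c'.
Proof. by move=> H; apply: functional_extensionality => x; apply: pred_ext. Qed.

Section Derivation.
Variables (A : comPzRingType) (delta : A -> A).
Hypothesis hdelta : is_derivation delta.

Lemma derD a b : delta (a + b) = delta a + delta b. Proof. exact: (proj1 hdelta). Qed.
Lemma derM a b : delta (a * b) = delta a * b + a * delta b. Proof. exact: (proj2 hdelta). Qed.

Lemma der0 : delta 0 = 0.
Proof. by apply: (addrI (delta 0)); rewrite -derD !addr0. Qed.

(* Needed to see that iota' commutes with the derivations: d(a/1) = (d a)/1. *)
Lemma der1 : delta 1 = 0.
Proof.
have h := derM 1 1; rewrite !mulr1 mul1r in h.
by apply: (addrI (delta 1)); rewrite addr0 -h.
Qed.

Lemma derB a b : delta (a - b) = delta a - delta b.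
Proof.
suff derN : delta (- b) = - delta b by rewrite derD derN.
by apply/esym/addr0_eq; rewrite -derD subrr der0.
Qed.

End Derivation.

Section FractionField.
Variables (A : comPzRingType) (n : nat) (d : 'I_n -> A -> A) (p : A -> Prop).
Hypothesis hp : diff_prime d p.

Lemma pI0 : p 0. Proof. by case: hp. Qed.
Lemma pD a b : p a -> p b -> p (a + b). Proof. by case: hp => _ [H _]; apply: H. Qed.
Lemma pN a : p a -> p (- a). Proof. by case: hp => _ [_ [H _]]; apply: H. Qed.
Lemma pM r a : p a -> p (r * a). Proof. by case: hp => _ [_ [_ [H _]]]; apply: H. Qed.
Lemma pMr r a : p a -> p (a * r). Proof. by rewrite mulrC; apply: pM. Qed.
Lemma p1 : ~ p 1. Proof. by case: hp => _ [_ [_ [_ [H _]]]]. Qed.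
Lemma pP a b : p (a * b) -> p a \/ p b. Proof. by case: hp => _ [_ [_ [_ [_ [H _]]]]]; apply: H. Qed.
Lemma pd i a : p a -> p (d i a). Proof. by case: hp => _ [_ [_ [_ [_ [_ H]]]]]; apply: H. Qed.
Lemma pB a b : p a -> p b -> p (a - b). Proof. by move=> Ha Hb; apply: pD => //; apply: pN. Qed.

Lemma nzM a b : ~ p a -> ~ p b -> ~ p (a * b). Proof. by move=> Ha Hb /pP []. Qed.

Lemma Kfrac_le a b a' b' x y :
  ~ p b -> p (a * b' - a' * b) -> Kfrac p a b x y -> Kfrac p a' b' x y.
Proof.
move=> Hb Hab [Hy Hxy]; split=> //.
have : p (b * (x * b' - a' * y)).
  have -> : b * (x * b' - a' * y) = b' * (x * b - a * y) + y * (a * b' - a' * b) by ring.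
  by apply: pD; apply: pM.
by case/pP.
Qed.

Lemma Kfrac_eq a b a' b' :
  ~ p b -> ~ p b' -> p (a * b' - a' * b) -> Kfrac p a b = Kfrac p a' b'.
Proof.
move=> Hb Hb' Hab; apply: rel2_ext => x y; split; first exact: Kfrac_le.
apply: Kfrac_le => //; have -> : a' * b - a * b' = - (a * b' - a' * b) by ring.
exact: pN.
Qed.

Lemma Kfrac_cross a b a' b' :
  ~ p b -> ~ p b' -> a * b' = a' * b -> Kfrac p a b = Kfrac p a' b'.
Proof. by move=> Hb Hb' E; apply: Kfrac_eq => //; rewrite E subrr; exact: pI0. Qed.

Lemma Kfrac_refl a b : ~ p b -> Kfrac p a b a b.
Proof. by move=> Hb; split => //; rewrite subrr; exact: pI0. Qed.

Lemma Kfrac0 a b : ~ p b -> (Kfrac p a b 0 1 <-> p a).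
Proof.
move=> Hb; rewrite /Kfrac mul0r mulr1 sub0r; split=> [[_ /pN]|Ha]; first by rewrite opprK.
by split; [exact: p1 | exact: pN].
Qed.

Lemma Kfrac_zero a b : ~ p b -> p a -> Kfrac p a b = Kfrac p 0 1.
Proof.
move=> Hb Ha; apply: Kfrac_eq => //; first exact: p1.
by rewrite mulr1 mul0r subr0.
Qed.

Lemma Kclass_frac c : Kclass p c -> exists a b, ~ p b /\ c = Kfrac p a b.
Proof. by move=> [a [b [Hb H]]]; exists a, b; split => //; apply: rel2_ext. Qed.

Lemma Kadd_frac a1 b1 a2 b2 : ~ p b1 -> ~ p b2 ->
  Kadd p (Kfrac p a1 b1) (Kfrac p a2 b2) = Kfrac p (a1 * b2 + a2 * b1) (b1 * b2).
Proof.
move=> Hb1 Hb2; apply: rel2_ext => x y; split; last first.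
  by move=> H; exists a1, b1, a2, b2; do 2!(split; first exact: Kfrac_refl).
move=> [a1' [b1' [a2' [b2' [[Hb1' H1] [[Hb2' H2] H]]]]]].
apply: (Kfrac_le (nzM Hb1' Hb2') _ H).
have -> : (a1' * b2' + a2' * b1') * (b1 * b2) - (a1 * b2 + a2 * b1) * (b1' * b2')
  = b2 * b2' * (a1' * b1 - a1 * b1') + b1 * b1' * (a2' * b2 - a2 * b2') by ring.
by apply: pD; apply: pM.
Qed.

Lemma Kmul_frac a1 b1 a2 b2 : ~ p b1 -> ~ p b2 ->
  Kmul p (Kfrac p a1 b1) (Kfrac p a2 b2) = Kfrac p (a1 * a2) (b1 * b2).
Proof.
move=> Hb1 Hb2; apply: rel2_ext => x y; split; last first.
  by move=> H; exists a1, b1, a2, b2; do 2!(split; first exact: Kfrac_refl).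
move=> [a1' [b1' [a2' [b2' [[Hb1' H1] [[Hb2' H2] H]]]]]].
apply: (Kfrac_le (nzM Hb1' Hb2') _ H).
have -> : a1' * a2' * (b1 * b2) - a1 * a2 * (b1' * b2')
  = a2' * b2 * (a1' * b1 - a1 * b1') + a1 * b1' * (a2' * b2 - a2 * b2') by ring.
by apply: pD; apply: pM.
Qed.

Lemma Kopp_frac a b : ~ p b -> Kopp p (Kfrac p a b) = Kfrac p (- a) b.
Proof.
move=> Hb; apply: rel2_ext => x y; split; last first.
  by move=> H; exists a, b; split; first exact: Kfrac_refl.
move=> [a' [b' [[Hb' H1] H]]]; apply: (Kfrac_le Hb' _ H).
have -> : - a' * b - - a * b' = - (a' * b - a * b') by ring.
exact: pN.
Qed.

Lemma Kder_frac i a b : is_derivation (d i) -> ~ p b ->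
  Kder d p i (Kfrac p a b) = Kfrac p (d i a * b - a * d i b) (b * b).
Proof.
move=> hdi Hb; apply: rel2_ext => x y; split; last first.
  by move=> H; exists a, b; split; first exact: Kfrac_refl.
move=> [a' [b' [[Hb' H1] H]]]; apply: (Kfrac_le (nzM Hb' Hb') _ H).
have dH1 := pd i H1; rewrite (derB hdi) !(derM hdi) in dH1.
have -> : (d i a' * b' - a' * d i b') * (b * b) - (d i a * b - a * d i b) * (b' * b')
  = b * b' * (d i a' * b + a' * d i b - (d i a * b' + a * d i b'))
    - (b * d i b' + b' * d i b) * (a' * b - a * b') by ring.
by apply: pB; apply: pM.
Qed.

End FractionField.

Section Sections.
Variables (A : comPzRingType) (n : nat) (d : 'I_n -> A -> A).
Hypothesis hd : diff_ring_structure d.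
Local Notation io := (@iota' A n d).

Lemma nq1 (q : point d) : ~ pt q 1. Proof. exact: p1 (ptP q). Qed.

Lemma iotaD a b : io (a + b) = sadd (io a) (io b).
Proof.
apply: functional_extensionality => q.
by rewrite /sadd /iota' (Kadd_frac (ptP q)) ?mulr1 //; exact: nq1.
Qed.

Lemma iotaM a b : io (a * b) = smul (io a) (io b).
Proof.
apply: functional_extensionality => q.
by rewrite /smul /iota' (Kmul_frac (ptP q)) ?mulr1 //; exact: nq1.
Qed.

Lemma iotaN a : io (- a) = sopp (io a).
Proof.
apply: functional_extensionality => q.
by rewrite /sopp /iota' (Kopp_frac (ptP q)) //; exact: nq1.
Qed.

Lemma iotaDer i a : io (d i a) = sder i (io a).
Proof.
apply: functional_extensionality => q; have hdi := proj1 hd i.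
by rewrite /sder /iota' (Kder_frac (ptP q) _ hdi) ?(der1 hdi) ?mulr0 ?subr0 ?mulr1 //; exact: nq1.
Qed.

Lemma Oprime_frac f (q : point d) : Oprime f -> exists a b, ~ pt q b /\ f q = Kfrac (pt q) a b.
Proof. by move=> [fK _]; exact: Kclass_frac (fK q). Qed.

(* Subtraction in O'(X) behaves as in a ring; this is all the ring structure
   of O'(X) the argument needs. *)
Lemma saddNK (f g : sec d) : Oprime f -> Oprime g -> sadd (sadd f (sopp g)) g = f.
Proof.
move=> fO gO; apply: functional_extensionality => q; have hq := ptP q.
rewrite /sadd /sopp.
have [a [b [Hb ->]]] := Oprime_frac q fO; have [a' [b' [Hb' ->]]] := Oprime_frac q gO.
rewrite (Kopp_frac hq) // !(Kadd_frac hq) //; try by repeat apply: (nzM hq).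
apply: (Kfrac_cross hq); try by repeat apply: (nzM hq).
ring.
Qed.

Lemma ssubKr (f g : sec d) : Oprime f -> Oprime g -> sadd f (sopp (sadd f (sopp g))) = g.
Proof.
move=> fO gO; apply: functional_extensionality => q; have hq := ptP q.
rewrite /sadd /sopp.
have [a [b [Hb ->]]] := Oprime_frac q fO; have [a' [b' [Hb' ->]]] := Oprime_frac q gO.
rewrite (Kopp_frac hq) // (Kadd_frac hq) // (Kopp_frac hq) ?(Kadd_frac hq) //;
  try by repeat apply: (nzM hq).
apply: (Kfrac_cross hq); try by repeat apply: (nzM hq).
ring.
Qed.

(* f = a/b on the basic open set D(e) = X \ V(e). *)
Definition is_chart (f : sec d) (e a b : A) : Prop :=
  forall q : point d, ~ pt q e -> ~ pt q b /\ f q = Kfrac (pt q) a b.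

Lemma chart_at (f : sec d) (P : point d) :
  regular_at f P -> exists e a b, ~ pt P e /\ is_chart f e a b.
Proof.
move=> [W [a [b [[E HE] [WP HW]]]]].
have [e He] : exists e, ~ (E e -> pt P e).
  by apply: not_all_ex_not => H; exact: (HE P).1 WP H.
have [Ee Pe] := imply_to_and _ _ He.
exists e, a, b; split => // q qe.
have [qb Hq] := HW q ((HE q).2 (fun H => qe (H e Ee))).
by split => //; apply: rel2_ext.
Qed.

Lemma chart_annihilator (f : sec d) (e a b : A) : Oprime f -> is_chart f e a b ->
  smul (io e) (sadd (smul (io b) f) (sopp (io a))) = @szero _ _ d.
Proof.
move=> fO fe; apply: functional_extensionality => q; have hq := ptP q; have q1 := @nq1 q.
have [x [y [Hy fq]]] := Oprime_frac q fO.
rewrite /smul /sadd /sopp /iota' /szero fq (Kmul_frac hq) // (Kopp_frac hq) //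
  (Kadd_frac hq) ?(Kmul_frac hq) //; try by repeat apply: (nzM hq).
apply: (Kfrac_zero hq); first by repeat apply: (nzM hq).
rewrite !mulr1 !mul1r; have [qe|qe] := classic (pt q e); first exact: (pMr hq).
have [_ fqab] := fe q qe.
have [_ xy] : Kfrac (pt q) a b x y by rewrite -fqab fq; exact: (Kfrac_refl hq).
have -> : b * x + - a * y = x * b - a * y by ring.
exact: (pM hq).
Qed.

Definition chart_numerator (f : sec d) (c : A) : Prop :=
  exists e a b, c = e * a /\ is_chart f e a b.

Lemma vanish_numerators (f : sec d) (P : point d) :
  regular_at f P -> (f P 0 1 <-> forall c, chart_numerator f c -> pt P c).
Proof.
move=> fP; have hP := ptP P; split.
- move=> f0 c [e [a [b [-> fe]]]]; have [Pe|Pe] := classic (pt P e); first exact: (pMr hP).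
  have [Pb fPab] := fe P Pe; rewrite fPab (Kfrac0 hP) // in f0; exact: (pM hP).
- move=> Hc; have [e [a [b [Pe fe]]]] := chart_at fP; have [Pb ->] := fe P Pe.
  apply/(Kfrac0 hP) => //.
  by have /(pP hP) [] // : pt P (e * a) by apply: Hc; exists e, a, b.
Qed.

Lemma Point_eq (p1 p2 : A -> Prop) (h1 : diff_prime d p1) (h2 : diff_prime d p2) :
  p1 = p2 -> Point h1 = Point h2.
Proof. by move=> E; subst; rewrite (proof_irrelevance _ h1 h2). Qed.

Section Subring.
Variable D : sec d -> Prop.
Hypothesis hD : diff_subring_containing_iota D.

Lemma D_Oprime f : D f -> Oprime f. Proof. by case: hD => H _; exact: H. Qed.
Lemma D_regular f P : D f -> regular_at f P. Proof. by move/D_Oprime => [_]; apply. Qed.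
Lemma D_zero : D (@szero _ _ d). Proof. by case: hD => _ [H _]. Qed.
Lemma D_add f g : D f -> D g -> D (sadd f g). Proof. by case: hD => _ [_ [_ [H _]]]; apply: H. Qed.
Lemma D_opp f : D f -> D (sopp f). Proof. by case: hD => _ [_ [_ [_ [H _]]]]; apply: H. Qed.
Lemma D_mul f g : D f -> D g -> D (smul f g). Proof. by case: hD => _ [_ [_ [_ [_ [H _]]]]]; apply: H. Qed.
Lemma D_der i f : D f -> D (sder i f). Proof. by case: hD => _ [_ [_ [_ [_ [_ [H _]]]]]]; apply: H. Qed.
Lemma D_iota a : D (io a). Proof. by case: hD => _ [_ [_ [_ [_ [_ [_ H]]]]]]. Qed.

Section PrimeOfD.
Variable Q : sec d -> Prop.
Hypothesis hQ : diff_prime_D D Q.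

Lemma QD f : Q f -> D f. Proof. by case: hQ => H _; exact: H. Qed.
Lemma Q0 : Q (@szero _ _ d). Proof. by case: hQ => _ [H _]. Qed.

Lemma comap_prime : diff_prime d (comap Q).
Proof.
move: hQ => [_ [_ [QA [QN [QM [Q1 [QP Qd]]]]]]].
split; first exact: Q0.
split; first by move=> a b Ha Hb; rewrite /comap iotaD; apply: QA.
split; first by move=> a Ha; rewrite /comap iotaN; apply: QN.
split; first by move=> r a Ha; rewrite /comap iotaM; apply: QM => //; exact: D_iota.
split; first exact: Q1.
split; first by move=> a b; rewrite /comap iotaM; apply: QP; exact: D_iota.
by move=> i a Ha; rewrite /comap iotaDer; apply: Qd.
Qed.

Definition comap_point : point d := Point comap_prime.

Lemma prime_sub_iff f g : D f -> D g -> Q (sadd f (sopp g)) -> (Q f <-> Q g).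
Proof.
move: hQ => [_ [_ [QA [QN _]]]] Df Dg Qfg; have [fO gO] := (D_Oprime Df, D_Oprime Dg).
split=> [Qf|Qg]; first by rewrite -(ssubKr fO gO); apply: QA => //; exact: QN.
by rewrite -(saddNK fO gO); exact: QA.
Qed.

Lemma prime_cancel r f : D r -> D f -> ~ Q r -> (Q (smul r f) <-> Q f).
Proof.
move: hQ => [_ [_ [_ [_ [QM [_ [QP _]]]]]]] Dr Df nQr.
by split=> [/(QP _ _ Dr Df) []|] //; exact: QM.
Qed.

Lemma prime_vanishing f : D f -> (Q f <-> f comap_point 0 1).
Proof.
move=> Df; have hP := ptP comap_point.
have [e [a [b [Pe fe]]]] := chart_at (D_regular comap_point Df).
have [Pb ->] := fe _ Pe; rewrite (Kfrac0 hP) //.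
have Dbf : D (smul (io b) f) by apply: D_mul => //; exact: D_iota.
have Dbfa : D (sadd (smul (io b) f) (sopp (io a))).
  by apply: D_add => //; apply: D_opp; exact: D_iota.
have Qbfa : Q (sadd (smul (io b) f) (sopp (io a))).
  by rewrite -(prime_cancel (D_iota e) Dbfa Pe) (chart_annihilator (D_Oprime Df) fe); exact: Q0.
by rewrite -(prime_cancel (D_iota b)) // (prime_sub_iff Dbf (D_iota a) Qbfa).
Qed.

End PrimeOfD.

Definition vanishing (P : point d) : sec d -> Prop := fun f => D f /\ f P 0 1.

Lemma prime_eq_vanishing Q (hQ : diff_prime_D D Q) : Q = vanishing (comap_point hQ).
Proof.
apply: pred_ext => f; split=> [Qf|[Df]]; last exact: (prime_vanishing hQ Df).2.
have Df := QD hQ Qf.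
by split; last exact: (prime_vanishing hQ Df).1.
Qed.

Section VanishingIdeal.
Variable P : point d.
Let hP := ptP P.

Lemma value_frac f : D f ->
  exists a b, ~ pt P b /\ f P = Kfrac (pt P) a b /\ (f P 0 1 <-> pt P a).
Proof.
move=> Df; have [a [b [Pb fP]]] := Oprime_frac P (D_Oprime Df).
by exists a, b; rewrite fP (Kfrac0 hP).
Qed.

Lemma vanishing_add f g : vanishing P f -> vanishing P g -> vanishing P (sadd f g).
Proof.
move=> [Df f0] [Dg g0]; split; first exact: D_add.
have [a [b [Pb [fP [/(_ f0) Pa _]]]]] := value_frac Df.
have [a' [b' [Pb' [gP [/(_ g0) Pa' _]]]]] := value_frac Dg.
rewrite /sadd fP gP (Kadd_frac hP) // (Kfrac0 hP); last exact: (nzM hP).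
by apply: (pD hP); exact: (pMr hP).
Qed.

Lemma vanishing_opp f : vanishing P f -> vanishing P (sopp f).
Proof.
move=> [Df f0]; split; first exact: D_opp.
have [a [b [Pb [fP [/(_ f0) Pa _]]]]] := value_frac Df.
by rewrite /sopp fP (Kopp_frac hP) // (Kfrac0 hP) //; exact: (pN hP).
Qed.

Lemma vanishing_mul r f : D r -> vanishing P f -> vanishing P (smul r f).
Proof.
move=> Dr [Df f0]; split; first exact: D_mul.
have [a [b [Pb [fP [/(_ f0) Pa _]]]]] := value_frac Df.
have [a' [b' [Pb' [rP _]]]] := value_frac Dr.
by rewrite /smul fP rP (Kmul_frac hP) // (Kfrac0 hP); [exact: (pM hP) | exact: (nzM hP)].
Qed.

Lemma vanishing_der i f : vanishing P f -> vanishing P (sder i f).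
Proof.
move=> [Df f0]; split; first exact: D_der.
have [a [b [Pb [fP [/(_ f0) Pa _]]]]] := value_frac Df.
rewrite /sder fP (Kder_frac hP _ (proj1 hd i)) // (Kfrac0 hP); last exact: (nzM hP).
by apply: (pB hP); apply: (pMr hP) => //; exact: (pd hP).
Qed.

(* m_P is prime because K(P) is a domain. *)
Lemma vanishing_mul_prime f g : D f -> D g ->
  vanishing P (smul f g) -> vanishing P f \/ vanishing P g.
Proof.
move=> Df Dg [_]; have [a [b [Pb [fP f0]]]] := value_frac Df.
have [a' [b' [Pb' [gP g0]]]] := value_frac Dg.
rewrite /smul fP gP (Kmul_frac hP) // (Kfrac0 hP); last exact: (nzM hP).
by case/(pP hP) => [/f0.2|/g0.2] ?; [left | right].
Qed.

Lemma vanishing_prime : diff_prime_D D (vanishing P).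
Proof.
split; first by move=> f [].
split; first by split; [exact: D_zero | apply/(Kfrac0 hP); [exact: nq1 | exact: (pI0 hP)]].
split; first exact: vanishing_add.
split; first exact: vanishing_opp.
split; first exact: vanishing_mul.
split; first by move=> [_]; rewrite /sone (Kfrac0 hP); exact: nq1.
split; first exact: vanishing_mul_prime.
exact: vanishing_der.
Qed.

End VanishingIdeal.

Lemma comap_vanishing P : comap (vanishing P) = pt P.
Proof.
apply: pred_ext => a; rewrite /comap /vanishing /iota' (Kfrac0 (ptP P)); last exact: nq1.
by split=> [[]|] //; split => //; exact: D_iota.
Qed.

Lemma comap_injective Q1 Q2 : diff_prime_D D Q1 -> diff_prime_D D Q2 ->
  comap Q1 = comap Q2 -> Q1 = Q2.
Proof.
move=> h1 h2 E; rewrite (prime_eq_vanishing h1) (prime_eq_vanishing h2).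
by congr vanishing; exact: Point_eq.
Qed.

Lemma comap_surjective p : diff_prime d p -> exists Q, diff_prime_D D Q /\ comap Q = p.
Proof.
by move=> hp; exists (vanishing (Point hp)); split; [exact: vanishing_prime | exact: comap_vanishing].
Qed.

Lemma comap_image (C : (sec d -> Prop) -> Prop) P :
  (exists Q, diff_prime_D D Q /\ C Q /\ comap Q = pt P) <-> C (vanishing P).
Proof.
split=> [[Q [hQ [CQ EQ]]]|CP]; last first.
  exists (vanishing P); split; first exact: vanishing_prime.
  by split; last exact: comap_vanishing.
rewrite -(_ : comap_point hQ = P) -?prime_eq_vanishing //.
by case: P EQ => p hp EQ; exact: Point_eq.
Qed.

(* Continuity: the preimage of V(E) is V(iota'(E)). *)
Lemma comap_continuous C : closedA d C -> closedD D (fun Q => C (comap Q)).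
Proof.
move=> [E HE]; exists (fun f => exists2 a, E a & f = io a) => Q hQ.
apply: iff_trans (HE _ (comap_prime hQ)) _.
by split=> [H f [a Ea ->]|H a Ea]; apply: H => //; exists a.
Qed.

(* Closedness: the image of V(E) is cut out by the chart numerators of the f in E
   (and by 1 if E is not contained in D, in which case V(E) is empty). *)
Lemma comap_closed C : closedD D C ->
  closedA d (fun p => exists Q, diff_prime_D D Q /\ C Q /\ comap Q = p).
Proof.
move=> [E HE]; exists (fun c => exists2 f, E f & ~ D f \/ chart_numerator f c) => p hp.
apply: iff_trans (comap_image C (Point hp)) _.
apply: iff_trans (HE _ (vanishing_prime _)) _.
split=> [Hf c [f Ef [nDf|Nc]]|Hc f Ef].
- by case: nDf; case: (Hf f Ef).
- by have [Df fP] := Hf f Ef; exact: (vanish_numerators (D_regular _ Df)).1 fP c Nc.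
- have Df : D f.
    by apply: NNPP => nDf; apply: (p1 hp); apply: Hc; exists f => //; left.
  split => //; apply/(vanish_numerators (D_regular _ Df)) => c Nc.
  by apply: Hc; exists f => //; right.
Qed.

End Subring.
End Sections.

Theorem theorem2p6 (A : comPzRingType) (n : nat) (d : 'I_n -> A -> A)
  (hd : diff_ring_structure d) (D : sec d -> Prop)
  (hD : diff_subring_containing_iota D) :
  homeomorphism (diff_prime_D D) (diff_prime d) (closedD D) (closedA d) (@comap A n d).
Proof.
split; first by move=> Q hQ; exact: (comap_prime hd hD hQ).
split; first exact: (comap_injective hd hD).
split; first exact: (comap_surjective hd hD).
split; first exact: (comap_continuous hd hD).
exact: (comap_closed hd hD).
Qed.
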